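(* Let $\mathcal T$ be a trie with $n$ nodes over an alphabet $\Sigma$ of size $\sigma$, and consider the block representation of its bitvectors $B_c$ described in the context. This representation supports full rank queries $\mathrm{rank}(i,B_c)$, for every $c\in\Sigma$ and every $i\in[n]$, in $O(\log\sigma+\log\log n)$ time.
   Context: Word-RAM model with word size $\Theta(\log n)$. A trie over a finite totally ordered alphabet $\Sigma$ is a rooted ordered tree with edges labeled by symbols of $\Sigma$ such that edges leaving the same node have distinct labels and siblings are ordered by their incoming labels; $out(u)$ is the set of labels of edges leaving $u$. Strings are compared co-lexicographically (from right to left, $\epsilon$ smallest). Let $u_1,\dots,u_n$ be the nodes sorted co-lexicographically by the string labeling the path from the root to them. For $c\in\Sigma$, $B_c$ is the bitvector of length $n$ with $B_c[i]=1$ iff $c\in out(u_i)$. For a bitvector $B$, $\mathrm{rank}(i,B)$ is the number of ones in $B[1..i]$, $\mathrm{prank}(i,B)=\mathrm{rank}(i,B)$ if $B[i]=1$ and $-1$ otherwise, and $\mathrm{select}(j,B)$ is the position of the $j$-th one. An indexable dictionary (ID) for a bitvector of length $m$ with $x$ ones is the representation of Raman, Raman and Rao using at most $\log\binom{m}{x}+o(x)+O(\log\log m)$ bits and supporting select and partial rank in $O(1)$ time. The block representation: with $b=\lceil\sigma\log^2 n\rceil$ and $t=\lceil n/b\rceil$, each $B_c$ is split into consecutive blocks $B_c^1,\dots,B_c^t$ of length $b$ (the last possibly shorter); each block containing at least one 1 is stored as an ID; a $\sigma\times t$ table stores pointers to these IDs; a table $R[c][i]=\mathrm{rank}(b(i-1),B_c)$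 is stored; the array $C[c]=1+\sum_{c'\prec c}n_{c'}$ is stored, where $n_{c'}$ is the number of edges labeled $c'$; and the bitvector $S=S_{c_1}\cdots S_{c_\sigma}$ (characters in increasing order), with $S_c=1^{x_c^1}0\,1^{x_c^2}0\cdots1^{x_c^t}0$ where $x_c^i$ is the number of ones in $B_c^i$, is stored as an ID. *)

From Stdlib Require Import Reals.
From mathcomp Require Import all_boot.
Set Implicit Arguments. Unset Strict Implicit. Unset Printing Implicit Defensive.

(* Alphabet Sigma = {0,...,sigma-1} with the usual order on nat.      *)
(* Strings are seq nat.  A trie is represented by the set of strings   *)
(* labelling root-to-node paths (a bijection with its nodes), given as *)
(* the list u_1,...,u_n of these strings sorted co-lexicographically. *)

Fixpoint lexlt (s t : seq nat) : bool :=
  match s, t with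
  | _, [::] => false
  | [::], _ :: _ => true
  | a :: s', b :: t' => (a < b) || ((a == b) && lexlt s' t')
  end.

Definition colex_lt (s t : seq nat) : bool := lexlt (rev s) (rev t).

Definition is_trie (sigma : nat) (T : seq (seq nat)) : Prop :=
  [/\ [::] \in T,
      (forall u a, rcons u a \in T -> u \in T),
      (forall u, u \in T -> all (fun a => a < sigma) u)
    & sorted colex_lt T].

(* B_c[p] for p in 1..n : c \in out(u_p) *)
Definition Bbit (T : seq (seq nat)) (c p : nat) : bool :=
  (0 < p <= size T) && (rcons (nth [::] T p.-1) c \in T).

Definition rankB (T : seq (seq nat)) (c i : nat) : nat :=
  count (Bbit T c) (iota 1 i).

(* b = ceil(sigma * log2(n)^2) *)
Definition is_blocklen (sigma n b : nat) : Prop :=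
  Rlt (Rminus (INR b) 1) (Rmult (INR sigma) (pow (Rdiv (ln (INR n)) (ln 2)) 2))
  /\ Rle (Rmult (INR sigma) (pow (Rdiv (ln (INR n)) (ln 2)) 2)) (INR b).

(* t = ceil(n / b) *)
Definition nblocks (n b : nat) : nat := (n + b).-1 %/ b.

Definition blkbit (T : seq (seq nat)) (b c k j : nat) : bool :=
  [&& 0 < k, 0 < j, j <= b & Bbit T c (b * k.-1 + j)].

Definition blk_ones T b c k := count (blkbit T b c k) (iota 1 b).

(* select(j, B) on a bitvector of length len given by bits (1-based);
   returns 0 when j = 0 or j exceeds the number of ones *)
Definition sel (bits : nat -> bool) (len j : nat) : nat :=
  if j == 0 then 0 else nth 0 [seq p <- iota 1 len | bits p] j.-1.

(* partial rank; the value -1 is encoded by 0 (a genuine answer is >= 1) *)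
Definition prank (bits : nat -> bool) (p : nat) : nat :=
  if bits p then count bits (iota 1 p) else 0.

Definition Rtab T b c k : nat :=
  if (0 < k) && (k <= nblocks (size T) b) then rankB T c (b * k.-1) else 0.

Definition nedges (T : seq (seq nat)) (c : nat) : nat :=
  count (fun u => rcons u c \in T) T.

Definition Ctab (sigma : nat) T c : nat :=
  if c < sigma then (sumn [seq nedges T c' | c' <- iota 0 c]).+1 else 0.

Definition Sseq (sigma : nat) T b : seq bool :=
  flatten [seq flatten [seq rcons (nseq (blk_ones T b c k) true) false
                       | k <- iota 1 (nblocks (size T) b)]
          | c <- iota 0 sigma].

Definition Sbit (s : seq bool) (p : nat) : bool := (0 < p) && nth false s p.-1.

(* The O(1)-time operations offered by the block representation.     *)
Inductive qkind : Type :=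
| QR
| QC
| QPtr      (* 1 iff the pointer to the ID of B_c^k is non-null     *)
| QSel
| QPrank
| QSSel
| QSPrank.

Definition oracle (sigma : nat) (T : seq (seq nat)) (b : nat)
    (q : qkind) (x y z : nat) : nat :=
  match q with
  | QR => Rtab T b x y
  | QC => Ctab sigma T x
  | QPtr => has (blkbit T b x y) (iota 1 b)
  | QSel => sel (blkbit T b x y) b z
  | QPrank => prank (blkbit T b x y) z
  | QSSel => sel (Sbit (Sseq sigma T b)) (size (Sseq sigma T b)) x
  | QSPrank => prank (Sbit (Sseq sigma T b)) x
  end.

(* A word RAM with w-bit words: registers indexed by nat, unit-cost   *)
(* instructions, results reduced modulo 2^w.                          *)
Inductive instr : Type :=
| Iconst (d k : nat)
| Iadd (d a b : nat)
| Isub (d a b : nat)          (* truncated subtraction *)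
| Imul (d a b : nat)
| Idiv (d a b : nat)          (* x / 0 = 0 *)
| Ilt (d a b : nat)
| Ieq (d a b : nat)
| Ijz (a l : nat)
| Ijmp (l : nat)
| Iq (q : qkind) (d a1 a2 a3 : nat)
| Ihalt.

Definition upd (w : nat) (rg : nat -> nat) (d v : nat) : nat -> nat :=
  fun r => if r == d then v %% 2 ^ w else rg r.

(* run for at most fuel steps (each executed instruction, including
   halt, costs one step); Some rg if the program halts in time *)
Fixpoint run (w : nat) (orc : qkind -> nat -> nat -> nat -> nat)
    (P : seq instr) (fuel pc : nat) (rg : nat -> nat) : option (nat -> nat) :=
  match fuel with
  | 0 => None
  | f.+1 =>
    match nth Ihalt P pc with
    | Ihalt => Some rg
    | Iconst d k => run w orc P f pc.+1 (upd w rg d k)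
    | Iadd d a b => run w orc P f pc.+1 (upd w rg d (rg a + rg b))
    | Isub d a b => run w orc P f pc.+1 (upd w rg d (rg a - rg b))
    | Imul d a b => run w orc P f pc.+1 (upd w rg d (rg a * rg b))
    | Idiv d a b => run w orc P f pc.+1 (upd w rg d (rg a %/ rg b))
    | Ilt d a b => run w orc P f pc.+1 (upd w rg d (rg a < rg b))
    | Ieq d a b => run w orc P f pc.+1 (upd w rg d (rg a == rg b))
    | Ijz a l => run w orc P f (if rg a == 0 then l else pc.+1) rg
    | Ijmp l => run w orc P f l rg
    | Iq q d a1 a2 a3 =>
        run w orc P f pc.+1 (upd w rg d (orc q (rg a1) (rg a2) (rg a3)))
    end
  end.

Definition init_regs (w c i n sigma b : nat) : nat -> nat :=
  fun r => nth 0 [:: c; i; n; sigma; b; nblocks n b] r %% 2 ^ w.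

From Stdlib Require Import Reals Lra.
From mathcomp Require Import all_boot zify.
Set Implicit Arguments. Unset Strict Implicit. Unset Printing Implicit Defensive.

(* The table R gives rank(b(k-1), B_c) at the start of the block k containing
   position i, so it remains to find the rank r of the offset j of i inside
   that block.  For 0 < m <= j we have m <= r iff the m-th one of the block
   lies at a position s <= j, and select together with partial rank on the ID
   of the block decides this in constant time: if prank(s) >= m then s is a
   genuine one preceded by at least m ones.  Hence r is found by a binary
   search over [0, j] with O(log b) constant-time rounds, and
   b <= sigma (log n + 1)^2 gives log b = O(log sigma + log log n). *)

Lemma count_iota1_le (F : nat -> bool) s : count F (iota 1 s) <= s.
Proof. by rewrite -[X in _ <= X](size_iota 1) count_size. Qed.

Lemma leq_count_iota1 (F : nat -> bool) s j :
  s <= j -> count F (iota 1 s) <= count F (iota 1 j).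
Proof. by move=> /subnKC <-; rewrite iotaD count_cat leq_addr. Qed.

Lemma sel_spec (F : nat -> bool) len j m :
  j <= len -> 0 < m <= count F (iota 1 j) ->
  let s := sel F len m in [/\ 0 < s, s <= j, F s & m <= count F (iota 1 s)].
Proof.
move=> j_le /andP[m_gt0 m_le] s.
have s_def : s = nth 0 (filter F (iota 1 j)) m.-1.
  rewrite /s /sel eqn0Ngt m_gt0 /=; change (filter (fun p => F p)) with (filter F).
  rewrite -(subnKC j_le) iotaD filter_cat nth_cat size_filter ifT //; lia.
have m_lt : m.-1 < size (filter F (iota 1 j)) by rewrite size_filter; lia.
have : s \in filter F (iota 1 j) by rewrite s_def mem_nth.
rewrite mem_filter mem_iota => /andP[Fs /andP[s_gt0 s_lt]].
have s_le : s <= j by lia.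
split => //.
move: s_def; rewrite -(subnKC s_le) iotaD filter_cat nth_cat size_filter.
case: ltnP => [lt _|ge]; first lia.
set rest := filter F _.
have [in_rest|out] := ltnP (m.-1 - count F (iota 1 s)) (size rest).
  move=> s_eq; have := mem_nth 0 in_rest; rewrite -s_eq mem_filter mem_iota; lia.
by rewrite nth_default //; lia.
Qed.

Lemma sel_prank_test (F : nat -> bool) len j w m :
  j <= len -> j < 2 ^ w -> 0 < m <= j ->
  let s := sel F len m %% 2 ^ w in
  (s <= j) && (m <= prank F s %% 2 ^ w) = (m <= count F (iota 1 j)).
Proof.
move=> j_le j_small m_in s; apply/andP/idP => [[s_le m_le] | m_le].
  have : m <= prank F s by apply: leq_trans m_le (leq_mod _ _).
  rewrite /prank; case: (F s) => [m_le'|]; last by lia.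
  exact: leq_trans m_le' (leq_count_iota1 _ s_le).
have [s_gt0 s_le Fs m_le_s] := sel_spec j_le (introT andP (conj (proj1 (andP m_in)) m_le)).
have count_le := count_iota1_le F (sel F len m).
by rewrite /s /prank modn_small ?Fs ?modn_small //; lia.
Qed.

Lemma rankB_block T c b q j : j <= b ->
  rankB T c (b * q + j) = rankB T c (b * q) + count (blkbit T b c q.+1) (iota 1 j).
Proof.
move=> j_le; rewrite /rankB iotaD count_cat [1 + _]addnC iotaDl count_map.
congr addn; apply: eq_in_count => p; rewrite mem_iota /blkbit /= => p_in.
have [p_gt0 p_le] : 0 < p /\ p <= b by lia.
by rewrite p_gt0 p_le.
Qed.

Lemma nblocksE n b : 0 < n -> 0 < b -> nblocks n b = (n - 1) %/ b + 1.
Proof.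
move=> n_gt0 b_gt0; rewrite /nblocks (_ : (n + b).-1 = n - 1 + b); last by lia.
by rewrite divnDr ?divnn ?b_gt0.
Qed.

Lemma INR_expn m k : INR (m ^ k) = pow (INR m) k.
Proof. by elim: k => [|k IHk]; rewrite ?expnS ?mult_INR ?IHk. Qed.

Lemma log2_bounds n : 2 <= n ->
  Rle 1 (Rdiv (ln (INR n)) (ln 2)) /\
  Rlt (Rdiv (ln (INR n)) (ln 2)) (INR (trunc_log 2 n).+1).
Proof.
move=> n_ge2.
have ln2_gt0 : Rlt 0 (ln 2) by have := ln_lt_2; lra.
have n_ge2R : Rle 2 (INR n) by apply: (le_INR 2); apply/leP.
have ln_n_ge : Rle (ln 2) (ln (INR n)).
  case: (Rle_lt_or_eq_dec _ _ n_ge2R) => [lt|<-]; last lra.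
  by apply/Rlt_le/ln_increasing; lra.
have ln_n_lt : Rlt (ln (INR n)) (Rmult (INR (trunc_log 2 n).+1) (ln 2)).
  rewrite -ln_pow; last lra.
  apply: ln_increasing; first lra.
  by rewrite -(INR_expn 2); apply/lt_INR/ltP/trunc_log_ltn.
have x_ln2 : Rmult (Rdiv (ln (INR n)) (ln 2)) (ln 2) = ln (INR n) by field; lra.
split; nra.
Qed.

Lemma blocklen_bounds sigma n b : 2 <= n -> 0 < sigma -> is_blocklen sigma n b ->
  0 < b <= sigma * (trunc_log 2 n).+1 ^ 2.
Proof.
move=> n_ge2 sigma_gt0 [b_lt b_ge].
have [x_ge1 x_lt] := log2_bounds n_ge2.
move: b_lt b_ge x_ge1 x_lt; set x := Rdiv _ _; set L := INR (trunc_log 2 n).+1.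
move=> b_lt b_ge x_ge1 x_lt.
have sigma_ge1 : Rle 1 (INR sigma) by apply: (le_INR 1); apply/leP.
have x2_le : Rle (Rmult (INR sigma) (pow x 2)) (Rmult (INR sigma) (Rmult L L)).
  by apply: Rmult_le_compat_l; [lra | rewrite /= Rmult_1_r; apply: Rmult_le_compat; lra].
apply/andP; split.
- apply/ltP/INR_lt; rewrite /=; nra.
- rewrite -ltnS; apply/ltP/INR_lt; rewrite S_INR expnS expn1 !mult_INR -/L; lra.
Qed.

Lemma trunc_log_blocklen sigma L b : 0 < b -> b <= sigma * L.+1 ^ 2 ->
  trunc_log 2 b <= trunc_log 2 sigma + (trunc_log 2 L).*2 + 2.
Proof.
move=> b_gt0 b_le.
rewrite -ltnS -(ltn_exp2l _ _ (ltnSn 1)).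
apply: leq_ltn_trans (trunc_logP (ltnSn 1) b_gt0) _; apply: leq_ltn_trans b_le _.
have sigma_lt := trunc_log_ltn sigma (ltnSn 1).
have L_lt := trunc_log_ltn L (ltnSn 1).
apply: (@leq_ltn_trans (sigma * (2 ^ (trunc_log 2 L).+1) ^ 2)).
  by rewrite leq_mul2l leq_exp2r // L_lt orbT.
rewrite -expnM (_ : (trunc_log 2 sigma + (trunc_log 2 L).*2 + 2).+1 =
                    (trunc_log 2 sigma).+1 + (trunc_log 2 L).+1 * 2); last by lia.
by rewrite expnD ltn_pmul2r ?expn_gt0.
Qed.

Definition exec_instr w orc P (ins : instr) fuel pc (rg : nat -> nat) :
    option (nat -> nat) :=
  match ins with
  | Ihalt => Some rg
  | Iconst d k => run w orc P fuel pc.+1 (upd w rg d k)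
  | Iadd d a b => run w orc P fuel pc.+1 (upd w rg d (rg a + rg b))
  | Isub d a b => run w orc P fuel pc.+1 (upd w rg d (rg a - rg b))
  | Imul d a b => run w orc P fuel pc.+1 (upd w rg d (rg a * rg b))
  | Idiv d a b => run w orc P fuel pc.+1 (upd w rg d (rg a %/ rg b))
  | Ilt d a b => run w orc P fuel pc.+1 (upd w rg d (rg a < rg b))
  | Ieq d a b => run w orc P fuel pc.+1 (upd w rg d (rg a == rg b))
  | Ijz a l => run w orc P fuel (if rg a == 0 then l else pc.+1) rg
  | Ijmp l => run w orc P fuel l rg
  | Iq q d a1 a2 a3 => run w orc P fuel pc.+1 (upd w rg d (orc q (rg a1) (rg a2) (rg a3)))
  end.

Lemma run_S w orc P fuel pc rg :
  run w orc P fuel.+1 pc rg = exec_instr w orc P (nth Ihalt P pc) fuel pc rg.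
Proof. by []. Qed.

Lemma run_fuel_mono w orc P f f' pc rg rg' :
  f <= f' -> run w orc P f pc rg = Some rg' -> run w orc P f' pc rg = Some rg'.
Proof.
elim: f f' pc rg => [//|f IHf] [//|f'] pc rg /= f_le.
by case: (nth Ihalt P pc) => * //; apply: IHf.
Qed.

Definition outputs w orc P fuel pc rg v :=
  omap (fun rg' => rg' 0) (run w orc P fuel pc rg) = Some v.

Lemma outputs_mono w orc P f f' pc rg v :
  f <= f' -> outputs w orc P f pc rg v -> outputs w orc P f' pc rg v.
Proof.
rewrite /outputs; case E: (run _ _ _ f _ _) => [rg'|//] f_le.
by rewrite (run_fuel_mono f_le E).
Qed.

Lemma outputsP w orc P f pc rg v : outputs w orc P f pc rg v ->
  exists rg', run w orc P f pc rg = Some rg' /\ rg' 0 = v.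
Proof. by rewrite /outputs; case: run => // rg' [<-]; exists rg'. Qed.

Lemma upd_eq w rg d v : upd w rg d v d = v %% 2 ^ w.
Proof. by rewrite /upd eqxx. Qed.

Lemma upd_neq w rg d v r : r != d -> upd w rg d v r = rg r.
Proof. by rewrite /upd => /negbTE ->. Qed.

Lemma modn_bool_exp2 w (b : bool) : 0 < w -> b %% 2 ^ w = b.
Proof.
move=> w_gt0; apply: modn_small.
by case: b; [exact: leq_ltn_trans w_gt0 (ltn_expl _ _) | rewrite expn_gt0].
Qed.

(* Registers: r0 = c (and the answer), r1 = i, r4 = block length, r5 = t,
   r6 = 1, r8 = block index k, r9 = offset j of i in block k,
   r10/r11 = bounds lo/hi of the binary search, r12 = its midpoint,
   r18 = R[c][k].  When t = 1 the block length b may not fit in a word, so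
   the program uses i instead, which yields the same block index 1 and
   offset i. *)
Definition rank_prog : seq instr := [::
  Iconst 6 1; Ieq 7 5 6; Ijz 7 4; Imul 4 1 6;
  Isub 7 1 6; Idiv 8 7 4; Imul 7 8 4; Isub 9 1 7; Iadd 8 8 6;
  Iq QR 18 0 8 8; Iconst 10 0; Imul 11 9 6;
  Ilt 7 10 11; Ijz 7 29; Isub 12 11 10; Iadd 7 6 6; Idiv 12 12 7;
  Iadd 12 12 6; Iadd 12 12 10; Iq QSel 13 0 8 12; Iq QPrank 14 0 8 13;
  Ilt 15 9 13; Ilt 16 14 12; Iadd 15 15 16; Ijz 15 27; Isub 11 12 6;
  Ijmp 12; Imul 10 12 6; Ijmp 12;
  Iadd 0 18 10; Ihalt].

Ltac step := rewrite run_S; cbn [exec_instr nth negb rank_prog];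
  rewrite ?(upd_eq, upd_neq) ?modn_bool_exp2 ?eqb0 //.

Ltac drop_mods := repeat match goal with
  |- context [?x %% 2 ^ ?w] => rewrite (@modn_small x (2 ^ w)); last by lia
  end.

Tactic Notation "step" "using" constr(regs) := step; rewrite ?regs; drop_mods.

Definition rank_test w (orc : qkind -> nat -> nat -> nat -> nat) c k j r : Prop :=
  forall m, 0 < m <= j ->
  let s := orc QSel c k m %% 2 ^ w in
  (s <= j) && (m <= orc QPrank c k s %% 2 ^ w) = (m <= r).

Section BinarySearch.
Variables (w : nat) (orc : qkind -> nat -> nat -> nat -> nat) (c k j R r : nat).
Hypotheses (w_ge2 : 1 < w) (j_small : j < 2 ^ w) (r_le_j : r <= j).
Hypotheses (Rr_small : R + r < 2 ^ w) (test : rank_test w orc c k j r).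

Lemma rank_prog_search_exit f rg : rg 18 = R -> rg 11 <= rg 10 -> rg 10 = r ->
  outputs w orc rank_prog f.+4 12 rg (R + r).
Proof.
have w_gt0 : 0 < w by lia.
move=> r18 hi_le_lo lo_r; rewrite /outputs.
step; step; rewrite ltnNge hi_le_lo.
by step; step; rewrite /= upd_eq r18 lo_r modn_small.
Qed.

Lemma rank_prog_search e rg :
  rg 0 = c -> rg 6 = 1 -> rg 8 = k -> rg 9 = j -> rg 18 = R ->
  rg 10 <= r <= rg 11 -> rg 11 <= j -> rg 11 - rg 10 < 2 ^ e ->
  outputs w orc rank_prog (15 * e + 4) 12 rg (R + r).
Proof.
have w_gt0 : 0 < w by lia.
have two_small : 2 < 2 ^ w by exact: leq_ltn_trans w_ge2 (ltn_expl _ _).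
elim: e rg => [|e IHe] rg r0 r6 r8 r9 r18 lo_r_hi hi_le width.
  by rewrite addnC; apply: rank_prog_search_exit; rewrite expn0 in width; lia.
have [lo_lt_hi|hi_le_lo] := ltnP (rg 10) (rg 11); last first.
  by rewrite addnC; apply: rank_prog_search_exit; lia.
have regs := (r0, r6, r8, r9, r18).
rewrite /outputs (_ : 15 * e.+1 + 4 = (15 * e + 4).+4.+4.+4.+3); last by lia.
step; step; rewrite lo_lt_hi.
do 7 step using regs.
set m := (rg 11 - rg 10) %/ (1 + 1) + 1 + rg 10.
have m_in : rg 10 < m <= rg 11 by rewrite /m; lia.
do 4 step using regs.
rewrite addn_eq0 !eqb0 -!leqNgt test; last by lia.
rewrite expnS in width.
have [m_le_r|r_lt_m] := leqP m r.
- do 2 step using regs; rewrite muln1.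
  by apply: IHe; rewrite ?(upd_eq, upd_neq) //; drop_mods; lia.
- do 2 step using regs.
  by apply: IHe; rewrite ?(upd_eq, upd_neq) //; drop_mods; lia.
Qed.

End BinarySearch.

Lemma rank_prog_block w orc c i beta q j r e rg :
  1 < w -> i < 2 ^ w -> i = q * beta + j -> 0 < j <= beta -> r <= j ->
  j < 2 ^ e -> orc QR c q.+1 q.+1 + r < 2 ^ w -> rank_test w orc c q.+1 j r ->
  rg 0 = c -> rg 1 = i -> rg 4 = beta -> rg 6 = 1 ->
  outputs w orc rank_prog (15 * e + 12) 4 rg (orc QR c q.+1 q.+1 + r).
Proof.
move=> w_ge2 i_small i_eq j_in r_le_j j_lt Rr_small test r0 r1 r4 r6.
have w_gt0 : 0 < w by lia.
have q_eq : (i - 1) %/ beta = q by rewrite i_eq -addnBA ?divnMDl ?divn_small ?addn0 //; lia.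
have q_lt : q < i by nia.
have regs := (r0, r1, r4, r6).
rewrite /outputs (_ : 15 * e + 12 = (15 * e + 4).+4.+4); last by lia.
do 2 step using regs.
rewrite q_eq; drop_mods.
do 6 step using regs.
apply: (rank_prog_search w_ge2 _ r_le_j Rr_small test);
  by rewrite ?(upd_eq, upd_neq) // ?addn1; drop_mods; lia.
Qed.

Lemma rank_prog_correct w orc c i n sigma b q j r e :
  1 < w -> n < 2 ^ w -> c < 2 ^ w -> 0 < i <= n -> 0 < b ->
  i = q * b + j -> 0 < j <= b -> q < nblocks n b -> r <= j -> j < 2 ^ e ->
  orc QR c q.+1 q.+1 + r < 2 ^ w -> rank_test w orc c q.+1 j r ->
  outputs w orc rank_prog (15 * e + 16) 0 (init_regs w c i n sigma b)
          (orc QR c q.+1 q.+1 + r).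
Proof.
move=> w_ge2 n_small c_small /andP[i_gt0 i_le] b_gt0 i_eq j_in q_lt r_le_j j_lt Rr_small test.
have w_gt0 : 0 < w by lia.
have t_eq := nblocksE (leq_trans i_gt0 i_le) b_gt0.
have t_small : nblocks n b < 2 ^ w.
  by rewrite t_eq; apply: leq_ltn_trans n_small; rewrite addn1 ltn_divLR //; nia.
have regs : (init_regs w c i n sigma b 0 = c) * (init_regs w c i n sigma b 1 = i) *
            (init_regs w c i n sigma b 5 = nblocks n b).
  by rewrite /init_regs /= !modn_small //; lia.
rewrite /outputs (_ : 15 * e + 16 = (15 * e + 12).+4); last by lia.
do 2 step using regs.
have [t1|t_ne1] := eqVneq (nblocks n b) 1.
- have j_eq : j = i by move: i_eq; rewrite (_ : q = 0) ?mul0n //; lia.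
  do 2 step.
  apply: (rank_prog_block (i := i) (beta := i) w_ge2 _ _ _ r_le_j j_lt Rr_small test);
    by rewrite ?(upd_eq, upd_neq) // ?regs; drop_mods; lia.
- have b_lt_n : b < n.
    by rewrite ltnNge; apply: contra t_ne1 => n_le_b; rewrite t_eq divn_small //; lia.
  have reg4 : init_regs w c i n sigma b 4 = b by rewrite /init_regs /= modn_small //; lia.
  step; apply: (outputs_mono (leqnSn _)).
  apply: (rank_prog_block w_ge2 _ i_eq j_in r_le_j j_lt Rr_small test);
    by rewrite ?(upd_eq, upd_neq) // ?regs ?reg4; drop_mods; lia.
Qed.

Theorem proposition2 :
  exists P : seq instr, forall A : nat, exists K : nat,
  forall (sigma : nat) (T : seq (seq nat)) (b w c i : nat),
    is_trie sigma T ->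
    2 <= size T ->
    is_blocklen sigma (size T) b ->
    size T < 2 ^ w -> sigma < 2 ^ w -> w <= A * trunc_log 2 (size T) ->
    c < sigma -> 1 <= i <= size T ->
    exists rg : nat -> nat,
      run w (oracle sigma T b) P
          (K * (trunc_log 2 sigma + trunc_log 2 (trunc_log 2 (size T)) + 1))
          0 (init_regs w c i (size T) sigma b) = Some rg
      /\ rg 0 = rankB T c i.
Proof.
exists rank_prog => A; exists 61.
move=> sigma T b w c i _ n_ge2 blen n_small sigma_small _ c_lt i_in.
set n := size T in n_ge2 blen n_small i_in *.
have [b_gt0 b_le] := andP (blocklen_bounds n_ge2 (leq_ltn_trans (leq0n c) c_lt) blen).
have w_ge2 : 1 < w by rewrite -(ltn_exp2l _ _ (ltnSn 1)) expn1; lia.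
set q := (i - 1) %/ b; set j := (i - 1) %% b + 1.
set r := count (blkbit T b c q.+1) (iota 1 j).
have i_eq : i = q * b + j by rewrite /j addnA -divn_eq; lia.
have j_in : 0 < j <= b by rewrite /j addn1 ltn_pmod.
have q_lt : q < nblocks n b by rewrite nblocksE ?addn1 ?ltnS ?leq_div2r //; lia.
have R_eq : oracle sigma T b QR c q.+1 q.+1 = rankB T c (b * q) by rewrite /= /Rtab q_lt.
have rank_eq : rankB T c i = rankB T c (b * q) + r.
  by rewrite {1}i_eq mulnC rankB_block //; case/andP: j_in.
have fuel_le : 15 * (trunc_log 2 b).+1 + 16 <=
               61 * (trunc_log 2 sigma + trunc_log 2 (trunc_log 2 n) + 1).
  by have := trunc_log_blocklen b_gt0 b_le; lia.
apply/outputsP/(outputs_mono fuel_le); rewrite rank_eq -R_eq.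
apply: (rank_prog_correct sigma (j := j) (r := r)) => //; rewrite ?R_eq -?rank_eq.
- lia.
- exact: count_iota1_le.
- by apply: leq_ltn_trans (trunc_log_ltn _ _); lia.
- by apply: leq_ltn_trans (count_iota1_le _ _) _; lia.
- by move=> m m_in; apply: sel_prank_test; lia.
Qed.
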